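(* Let $p$ be a prime, let $d_1,\dots,d_l$ be integers with $1\le d_\lambda\le p$, and put $d=\sum_\lambda d_\lambda$. Then for every integer $s$ with $1\le s\le p-1$, \[ s-\mathrm{sht}_V(s)=\mathrm{sht}_V(p-s)+s+d-l-D_V. \]
   Context: Here $D_V:=\sum_{\lambda=1}^{l}\frac{(d_\lambda-1)d_\lambda}{2}$ and, for a positive integer $j$ with $p\nmid j$, $\mathrm{sht}_V(j):=\sum_{\lambda=1}^{l}\sum_{i=1}^{d_\lambda-1}\lfloor ij/p\rfloor$. (In the paper these arise from the decomposition $V\cong\bigoplus_\lambda V_{d_\lambda}$ of a representation of $\mathbb{Z}/p$ in characteristic $p$ into indecomposables.) *)

From mathcomp Require Import all_boot all_order all_algebra.
Set Implicit Arguments. Unset Strict Implicit. Unset Printing Implicit Defensive.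

(* A representation V of Z/p is encoded by the list ds = [d_1; ...; d_l]
   of the dimensions of its indecomposable summands V_{d_lambda}. *)

Definition D_V (ds : seq nat) : nat := \sum_(dl <- ds) ((dl - 1) * dl) %/ 2.

Definition sht_V (p : nat) (ds : seq nat) (j : nat) : nat :=
  \sum_(dl <- ds) \sum_(1 <= i < dl) (i * j) %/ p.

From mathcomp Require Import all_boot all_algebra zify.

(* For 0 < s < p and 0 < i < p the number i s / p is not an integer, and
   i s / p + i (p - s) / p = i, so their floors add up to i - 1.  Summing over
   1 <= i < d gives (d - 1)(d - 2)/2 = binom(d - 1, 2), and adding d yields
   binom(d, 2) + 1; summing over the summands of V gives the identity
   sht_V(s) + sht_V(p - s) + d = D_V + l, which is the claim rearranged. *)

Lemma divnD_ndvd p a b : 0 < p -> p %| a + b -> ~~ (p %| a) ->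
  a %/ p + b %/ p = ((a + b) %/ p).-1.
Proof.
move=> p_gt0 dvd_ab ndvd_a.
have a_mod_gt0 : 0 < a %% p by rewrite lt0n.
have mod_sum_ge : p <= a %% p + b %% p.
  apply: dvdn_leq; first by rewrite addn_gt0 a_mod_gt0.
  by rewrite /dvdn modnDm.
by rewrite divnD // mod_sum_ge addn1.
Qed.

Lemma floor_mul_compl p s i : prime p -> 0 < s < p -> 0 < i < p ->
  i * s %/ p + i * (p - s) %/ p = i.-1.
Proof.
move=> p_pr /andP[s_gt0 s_lt_p] /andP[i_gt0 i_lt_p].
have p_gt0 := prime_gt0 p_pr.
have sum_eq : i * s + i * (p - s) = i * p by rewrite -mulnDr subnKC // ltnW.
have ndvd_is : ~~ (p %| i * s) by rewrite Euclid_dvdM // negb_or !gtnNdvd.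
by rewrite divnD_ndvd // sum_eq ?dvdn_mull // mulnK.
Qed.

Lemma sum_floor_mul_compl p s d : prime p -> 0 < s < p -> 0 < d <= p ->
  \sum_(1 <= i < d) (i * s %/ p + i * (p - s) %/ p) + d = 'C(d, 2) + 1.
Proof.
move=> p_pr s_range /andP[d_gt0 d_le_p].
rewrite (eq_big_nat _ _ (F2 := fun i => i.-1)); last first.
  by move=> i /andP[i_gt0 i_lt_d]; rewrite floor_mul_compl // i_gt0 (leq_trans i_lt_d).
case: d d_gt0 d_le_p => // d _ _.
have -> : \sum_(1 <= i < d.+1) i.-1 = 'C(d, 2) by rewrite -bin2_sum big_add1.
by rewrite binS bin1 addnS addn1.
Qed.

Lemma sht_V_compl p s ds : prime p -> 0 < s < p -> all (fun dl => 1 <= dl <= p) ds ->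
  sht_V p ds s + sht_V p ds (p - s) + \sum_(dl <- ds) dl = D_V ds + size ds.
Proof.
move=> p_pr s_range /allP ds_range.
rewrite /sht_V /D_V -sum1_size -!big_split /=.
apply: eq_big_seq => dl /ds_range dl_range.
by rewrite -big_split sum_floor_mul_compl // bin2 -divn2 mulnC subn1.
Qed.

Local Open Scope ring_scope.
Theorem lemma3p2 (p : nat) (ds : seq nat) (s : nat) :
  prime p ->
  all (fun dl => (1 <= dl <= p)%N) ds ->
  (1 <= s <= p - 1)%N ->
  (s%:Z - (sht_V p ds s)%:Z =
   (sht_V p ds (p - s))%:Z + s%:Z + (\sum_(dl <- ds) dl)%N%:Z
     - (size ds)%:Z - (D_V ds)%:Z)%R.
Proof.
move=> p_pr ds_range s_range.
have s_bounds : (0 < s < p)%N by have := prime_gt1 p_pr; lia.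
have := sht_V_compl p s ds p_pr s_bounds ds_range; lia.
Qed.
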